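(* Let $n,m \in \mathbb{N}$, $a \in \Delta_n^+$, $b \in \Delta_m^+$, and let $g \colon \mathbb{R}^{n\times m} \to \mathbb{R}$ be the quadratic function \[ g(\pi) = \tfrac12 \langle \pi, H\pi\rangle + \langle C, \pi\rangle \quad \forall \pi \in \mathbb{R}^{n\times m}, \] where $H \in \mathbb{R}^{n\times n}$ is symmetric and $C \in \mathbb{R}^{n\times m}$. Assume $\lambda > \|H\|_\infty$. Let $T_\lambda \colon \mathbb{R}^{n\times m} \to \Pi_{a,b}^+$ be defined by $T_\lambda(A) = \operatorname{argmin}_{\pi \in \Pi_{a,b}} \big(\langle \nabla g(A), \pi\rangle + \lambda h(\pi)\big)$. Then $T_\lambda$ is a contraction with respect to the distance induced by $\|\cdot\|_1$ and has a unique fixed point $\pi^\star \in \Pi_{a,b}^+$. Moreover, for any $\pi^{(0)} \in \Pi_{a,b}$, the sequence defined by $\pi^{(k+1)} = T_\lambda(\pi^{(k)})$ for $k \ge 0$ satisfies, for every $T \in \mathbb{N}$, \[ \|\pi^{(T)} - \pi^\star\|_1 \le \frac{(\|H\|_\infty/\lambda)^T}{1 - \|H\|_\infty/\lambda}\, \|\pi^{(1)} - \pi^{(0)}\|_1 . \]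
   Context: $\Delta_n^+ := \{a \in \mathbb{R}^n : a_i > 0\ \forall i,\ \sum_i a_i = 1\}$. $\Pi_{a,b} := \{\pi \in \mathbb{R}_+^{n\times m} : \pi 1_m = a,\ \pi^\top 1_n = b\}$ and $\Pi_{a,b}^+$ is its subset with all entries strictly positive. $h(\pi) := \sum_{i,j}\pi_{ij}\log\frac{\pi_{ij}}{e}$ (with $0\log0=0$); for each $A$ the minimizer defining $T_\lambda(A)$ exists, is unique, and lies in $\Pi_{a,b}^+$. $\langle A,B\rangle = \mathrm{tr}(A^\top B)$; $\|A\|_1 := \sum_{i,j}|A_{ij}|$ and $\|A\|_\infty := \max_{i,j}|A_{ij}|$ (so $\|H\|_\infty$ is the largest absolute entry of $H$). *)

From HB Require Import structures.
From mathcomp Require Import all_boot all_order all_algebra.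
From mathcomp Require Import reals.
From mathcomp.analysis Require Import sequences exp.
Set Implicit Arguments. Unset Strict Implicit. Unset Printing Implicit Defensive.
Import Order.TTheory GRing.Theory Num.Theory.
Local Open Scope ring_scope.

Section Defs.
Variable R : realType.

Definition simplex_pos (n : nat) (a : 'cV[R]_n) : Prop :=
  (forall i, 0 < a i 0) /\ \sum_(i < n) a i 0 = 1.

Definition couplings (n m : nat) (a : 'cV[R]_n) (b : 'cV[R]_m)
    (pi : 'M[R]_(n, m)) : Prop :=
  (forall i j, 0 <= pi i j) /\
  pi *m const_mx 1 = a /\ pi^T *m const_mx 1 = b.

Definition couplings_pos (n m : nat) (a : 'cV[R]_n) (b : 'cV[R]_m)
    (pi : 'M[R]_(n, m)) : Prop :=
  couplings a b pi /\ (forall i j, 0 < pi i j).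

Definition frob (n m : nat) (A B : 'M[R]_(n, m)) : R := \tr (A^T *m B).

Definition norm1 (n m : nat) (A : 'M[R]_(n, m)) : R :=
  \sum_(i < n) \sum_(j < m) `|A i j|.

Definition norminf (n m : nat) (A : 'M[R]_(n, m)) : R :=
  \big[Num.max/0]_(i < n) \big[Num.max/0]_(j < m) `|A i j|.

Definition entropy_h (n m : nat) (pi : 'M[R]_(n, m)) : R :=
  \sum_(i < n) \sum_(j < m)
     (if pi i j == 0 then 0 else pi i j * ln (pi i j / expR 1)).

Definition quad_g (n m : nat) (H : 'M[R]_n) (C : 'M[R]_(n, m))
    (pi : 'M[R]_(n, m)) : R :=
  2^-1 * frob pi (H *m pi) + frob C pi.

(* Gradient of quad_g at A: (H + H^T)/2 A + C, which equals H A + C for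
   symmetric H. *)
Definition grad_g (n m : nat) (H : 'M[R]_n) (C : 'M[R]_(n, m))
    (A : 'M[R]_(n, m)) : 'M[R]_(n, m) :=
  (2^-1 *: (H + H^T)) *m A + C.

Definition T_obj (n m : nat) (H : 'M[R]_n) (C : 'M[R]_(n, m)) (lam : R)
    (A pi : 'M[R]_(n, m)) : R :=
  frob (grad_g H C A) pi + lam * entropy_h pi.

Definition is_T_lambda (n m : nat) (a : 'cV[R]_n) (b : 'cV[R]_m)
    (H : 'M[R]_n) (C : 'M[R]_(n, m)) (lam : R)
    (T : 'M[R]_(n, m) -> 'M[R]_(n, m)) : Prop :=
  forall A, couplings a b (T A) /\
    forall pi, couplings a b pi -> T_obj H C lam A (T A) <= T_obj H C lam A pi.

End Defs.

From HB Require Import structures.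
From mathcomp Require Import all_boot all_order all_algebra.
From mathcomp Require Import boolp classical_sets reals topology normedtype.
From mathcomp Require Import sequences derive exp.
From mathcomp Require Import ring lra.
Import Order.TTheory GRing.Theory Num.Theory numFieldNormedType.Exports.
Set Implicit Arguments. Unset Strict Implicit. Unset Printing Implicit Defensive.
Local Open Scope ring_scope.

(* T_lambda(A) minimises <grad g(A), pi> + lambda h(pi) over the couplings.
   Its values are strictly positive: along the segment from a minimiser towards
   the positive coupling a b^T, a zero entry would let the objective decrease
   like t ln t. For p = T_lambda(A) and p' = T_lambda(B), adding the two
   first-order optimality conditions gives
     lambda <ln p - ln p', p - p'> <= <grad g(A) - grad g(B), p' - p>
                                   <= ||H||_oo ||A - B||_1 ||p - p'||_1,
   while the logarithmic-mean inequality (ln x - ln y)(x - y) >= 2(x - y)^2/(x + y)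
   and Cauchy-Schwarz bound the left-hand side below by lambda ||p - p'||_1^2,
   since p and p' are probability vectors. So T_lambda is a contraction of ratio
   ||H||_oo / lambda for ||.||_1, and the Banach fixed point argument yields the
   fixed point and the a priori error bound. The optimality conditions are
   written at interior points of segments, where ln is finite. *)

Section scalar.
Variable R : realType.
Implicit Types x y t r : R.

Lemma ln_ge_1subV x : 0 < x -> 1 - x^-1 <= ln x.
Proof.
move=> x0; have := expR_ge1Dx (- ln x).
rewrite expRN lnK ?posrE //; lra.
Qed.

Definition entr x := if x == 0 then 0 else x * ln (x / expR 1).

Lemma entrE x : 0 <= x -> entr x = x * ln x - x.
Proof.
rewrite /entr; case: eqP => [->|/eqP x0 xge]; first by rewrite mul0r subr0.
have xp : 0 < x by rewrite lt_def x0.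
by rewrite ln_div ?posrE ?expR_gt0 // expRK mulrBr mulr1.
Qed.

Lemma entr_tangent x y : 0 < x -> 0 <= y -> entr x + ln x * (y - x) <= entr y.
Proof.
move=> x0 y0; rewrite (entrE y0) (entrE (ltW x0)).
have [->|yn0] := eqVneq y 0; first by rewrite mul0r; nra.
have yp : 0 < y by rewrite lt_def yn0.
have := ler_wpM2l (ltW yp) (ln_ge_1subV (divr_gt0 yp x0)).
rewrite ln_div ?posrE // invf_div mulrBr mulr1 mulrCA divff ?gt_eqF // mulr1.
lra.
Qed.

Lemma entr_convex x y t : 0 <= x -> 0 <= y -> 0 <= t <= 1 ->
  0 < (1 - t) * x + t * y ->
  entr ((1 - t) * x + t * y) <= (1 - t) * entr x + t * entr y.
Proof.
move=> x0 y0 /andP[t0 t1] z0.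
have t1' : 0 <= 1 - t by lra.
have hx := ler_wpM2l t1' (entr_tangent z0 x0).
have hy := ler_wpM2l t0 (entr_tangent z0 y0).
set z := (1 - t) * x + t * y in hx hy *.
have -> : entr z = (1 - t) * (entr z + ln z * (x - z)) + t * (entr z + ln z * (y - z)).
  by rewrite /z; ring.
exact: lerD.
Qed.

Lemma entrMl t y : 0 < t -> 0 < y -> entr (t * y) = t * entr y + t * y * ln t.
Proof. by move=> t0 y0; rewrite !entrE ?ltW ?mulr_gt0 // lnM ?posrE //; ring. Qed.

Lemma ln_ge_ratio r : 1 <= r -> 2 * (r - 1) / (r + 1) <= ln r.
Proof.
move=> r1; pose f y : R := (y + 1) * ln y - 2 * y.
have df y : 0 < y -> is_derive y 1 f ((y + 1) * y^-1 + ln y - 2).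
  move=> y0; have ? := is_derive1_ln y0.
  rewrite /f; apply: is_derive_eq.
  by rewrite /GRing.scale /= !mulr1 addr0 mulr1.
have [c] : exists2 c, c \in `[1, r] & f r - f 1 = ((c + 1) * c^-1 + ln c - 2) * (r - 1).
  apply: MVT_segment => // [y|].
    by rewrite in_itv /= => /andP[y1 _]; apply: df; lra.
  apply: derivable_within_continuous => y; rewrite in_itv /= => /andP[y1 _].
  by have [] := df y (lt_le_trans ltr01 y1).
rewrite in_itv /= /f ln1 mulr0 add0r mulr1 => /andP[c1 _] E.
have c0 : 0 < c by lra.
rewrite (mulrDl c 1) mulfV ?gt_eqF // mul1r in E.
have : 0 <= (1 + c^-1 + ln c - 2) * (r - 1).
  by apply: mulr_ge0; have := ln_ge_1subV c0; lra.
rewrite ler_pdivrMr; lra.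
Qed.

Lemma lnB_mulB_ge x y : 0 < x -> 0 < y ->
  2 * (x - y) ^+ 2 / (x + y) <= (ln x - ln y) * (x - y).
Proof.
wlog yx : x y / y <= x => [hwlog x0 y0|x0 y0].
  have [/hwlog|/ltW/hwlog h] := lerP y x; first exact.
  have -> : (ln x - ln y) * (x - y) = (ln y - ln x) * (y - x) by ring.
  by rewrite [x + y]addrC -[x - y]opprB sqrrN; exact: h.
have := ln_ge_ratio (_ : 1 <= x / y).
rewrite ler_pdivlMr // mul1r ln_div ?posrE // => /(_ yx).
have -> : 2 * (x / y - 1) / (x / y + 1) = 2 * (x - y) / (x + y).
  by field; rewrite !gt_eqF //; lra.
move=> /(ler_wpM2r (_ : 0 <= x - y)) h.
rewrite expr2 mulrA mulrAC; apply: h; lra.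
Qed.

Lemma sqr_sum_norm_le (I : finType) (d w : I -> R) : (forall i, 0 < w i) ->
  (\sum_i `|d i|) ^+ 2 <= (\sum_i w i) * \sum_i d i ^+ 2 / w i.
Proof.
move=> w0; set S : R := \sum_i `|d i|; set W := \sum_i w i; set Q := \sum_i _.
have [W0|Wn0] := eqVneq W 0.
  have wz := psumr_eq0P (fun i _ => ltW (w0 i)) W0.
  rewrite /S big1 ?expr0n ?W0 ?mul0r // => i _.
  by have := w0 i; rewrite wz ?ltxx.
have Wp : 0 < W by rewrite lt_def Wn0 sumr_ge0 // => i _; exact: ltW.
suff : 0 <= W * (W * Q - S ^+ 2) by rewrite pmulr_rge0 // subr_ge0.
have e i : (W * `|d i| - S * w i) ^+ 2 / w i =
    W ^+ 2 * (d i ^+ 2 / w i) - 2 * W * S * `|d i| + S ^+ 2 * w i.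
  by rewrite -[d i ^+ 2]real_normK ?num_real //; field; rewrite gt_eqF.
have -> : W * (W * Q - S ^+ 2) = \sum_i (W * `|d i| - S * w i) ^+ 2 / w i.
  rewrite (eq_bigr _ (fun i _ => e i)) !big_split sumrN /= -!mulr_sumr.
  by rewrite -/S -/Q -/W; ring.
by apply: sumr_ge0 => i _; rewrite divr_ge0 ?sqr_ge0 ?ltW.
Qed.

Lemma sqr_l1_le_jeffreys (I : finType) (p q : I -> R) :
  (forall i, 0 < p i) -> (forall i, 0 < q i) -> \sum_i p i = 1 -> \sum_i q i = 1 ->
  (\sum_i `|p i - q i|) ^+ 2 <= \sum_i (ln (p i) - ln (q i)) * (p i - q i).
Proof.
move=> p0 q0 p1 q1.
have w0 i : 0 < p i + q i by rewrite addr_gt0.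
apply: le_trans (sqr_sum_norm_le (fun i => p i - q i) w0) _.
rewrite big_split /= p1 q1 mulr_sumr; apply: ler_sum => i _.
by rewrite mulrA lnB_mulB_ge.
Qed.

Lemma le_of_mul01 x y : (forall u, 0 < u < 1 -> u * x <= y) -> x <= y.
Proof.
move=> H; rewrite leNgt; apply/negP => yx.
have hy : 2^-1 * x <= y by apply: H; lra.
have x0 : 0 < x by lra.
have := H ((x + y) / (2 * x)).
have -> : (x + y) / (2 * x) * x = (x + y) / 2 by field; rewrite gt_eqF.
rewrite divr_gt0 ?ltr_pdivrMr ?mulr_gt0 //=; lra.
Qed.

Lemma le0_geometric x c q : 0 <= q < 1 -> (forall k, x <= c * q ^+ k) -> x <= 0.
Proof.
move=> /andP[q0 q1] H; rewrite leNgt; apply/negP => x0.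
have qn1 : `|q| < 1 by rewrite ger0_norm.
have [N _ /(_ N (leqnn N)) /= hN] := cvgr_lt 0 (cvg_geometric c qn1) x x0.
by have := le_lt_trans (H N) hN; rewrite ltxx.
Qed.

Lemma sup_dist_le (u e : nat -> R) :
  (forall k l, (k <= l)%N -> `|u l - u k| <= e k) ->
  forall k, `|sup (range (fun l => u l - e l)) - u k| <= e k.
Proof.
move=> ue; set S := range _.
have e0 k : 0 <= e k by have := ue k k (leqnn k); rewrite subrr normr0.
have below k l : u l - e l <= u k + e k.
  have [kl|/ltnW lk] := leqP k l.
    by have := ue k l kl; have := ler_norm (u l - u k); have := e0 l; lra.
  have := ue l k lk; have := ler_norm (u l - u k); rewrite distrC.
  by have := e0 k; lra.
move=> k; rewrite ler_distl; apply/andP; split.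
  apply: (ub_le_sup (_ : has_ubound S)); last by exists k.
  by exists (u k + e k) => _ [l _ <-].
by apply: ge_sup; [exists (u k - e k), k|move=> _ [l _ <-]].
Qed.

End scalar.

Section entropic_objective.
Variables (R : realType) (I : finType) (lam : R).
Implicit Types (G x y z : I -> R) (t : R).

Definition entobj G x := \sum_i (G i * x i + lam * entr (x i)).

Definition mix t x y i := (1 - t) * x i + t * y i.

Definition min_towards G x y :=
  forall t, 0 < t <= 1 -> entobj G x <= entobj G (mix t x y).

Lemma sum_mix t x y : \sum_i mix t x y i = (1 - t) * \sum_i x i + t * \sum_i y i.
Proof. by rewrite big_split /= -!mulr_sumr. Qed.

Lemma mix_gt0 t x y : 0 < t < 1 -> (forall i, 0 < x i) -> (forall i, 0 < y i) ->
  forall i, 0 < mix t x y i.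
Proof.
by move=> /andP[t0 t1] x0 y0 i; rewrite /mix addr_gt0 ?mulr_gt0 ?subr_gt0.
Qed.

Lemma entobj_tangent G x z : 0 <= lam -> (forall i, 0 < z i) -> (forall i, 0 <= x i) ->
  entobj G z + \sum_i (G i + lam * ln (z i)) * (x i - z i) <= entobj G x.
Proof.
move=> lam0 z0 x0; rewrite -big_split; apply: ler_sum => i _ /=.
have := ler_wpM2l lam0 (entr_tangent (z0 i) (x0 i)); nra.
Qed.

Lemma min_towards_variational G x y t : 0 <= lam -> (forall i, 0 <= x i) ->
  0 < t -> (forall i, 0 < mix t x y i) -> entobj G x <= entobj G (mix t x y) ->
  0 <= \sum_i (G i + lam * ln (mix t x y i)) * (y i - x i).
Proof.
move=> lam0 x0 t0 z0 hmin.
have := entobj_tangent G lam0 z0 x0.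
have -> : \sum_i (G i + lam * ln (mix t x y i)) * (x i - mix t x y i) =
    - t * \sum_i (G i + lam * ln (mix t x y i)) * (y i - x i).
  by rewrite mulr_sumr; apply: eq_bigr => i _; rewrite /mix; ring.
by move=> h; rewrite -(pmulr_rge0 _ t0); lra.
Qed.

Lemma entobj_mix_le G x y t i0 :
  0 <= lam -> (forall i, 0 <= x i) -> (forall i, 0 < y i) -> 0 < t <= 1 -> x i0 = 0 ->
  entobj G (mix t x y) <=
    (1 - t) * entobj G x + t * entobj G y + lam * (t * y i0 * ln t).
Proof.
move=> lam0 x0 y0 /andP[t0 t1] xi0.
have hi i : G i * mix t x y i + lam * entr (mix t x y i) <=
    (1 - t) * (G i * x i + lam * entr (x i)) + t * (G i * y i + lam * entr (y i))
    + (if i == i0 then lam * (t * y i0 * ln t) else 0).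
  rewrite /mix; case: eqP => [->|_].
    rewrite xi0 mulr0 add0r entrMl // [entr 0]/entr eqxx; lra.
  have z0 : 0 < (1 - t) * x i + t * y i.
    by rewrite ltr_wpDl ?mulr_gt0 ?mulr_ge0 ?subr_ge0.
  have := entr_convex (x0 i) (ltW (y0 i)) (_ : 0 <= t <= 1) z0.
  by rewrite ltW // t1 => /(_ isT) /(ler_wpM2l lam0); lra.
apply: le_trans (ler_sum _ (fun i _ => hi i)) _.
by rewrite !big_split /= -!mulr_sumr -big_mkcond big_pred1_eq.
Qed.

Lemma min_towards_gt0 G x y : 0 < lam -> (forall i, 0 <= x i) -> (forall i, 0 < y i) ->
  min_towards G x y -> forall i, 0 < x i.
Proof.
move=> lam0 x0 y0 hmin i0; rewrite lt_def x0 andbT; apply/negP => /eqP xi0.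
have hlog t : 0 < t <= 1 -> entobj G x - entobj G y <= lam * y i0 * ln t.
  move=> /[dup] /andP[t0 _] ht.
  have := le_trans (hmin t ht) (entobj_mix_le G (ltW lam0) x0 y0 ht xi0).
  rewrite -subr_ge0 => h; rewrite -subr_ge0 -(pmulr_rge0 _ t0); nra.
set d := entobj G x - entobj G y in hlog.
have ly0 : 0 < lam * y i0 by rewrite mulr_gt0.
pose M := `|d| / (lam * y i0) + 1.
have M0 : 0 <= M by rewrite /M addr_ge0 // divr_ge0 // ltW.
have := hlog (expR (- M)); rewrite expR_gt0 expR_le1 oppr_le0 M0 expRK => /(_ isT).
have -> : lam * y i0 * - M = - `|d| - lam * y i0.
  by rewrite /M; field; rewrite !gt_eqF.
by have := ler_norm (- d); rewrite normrN; lra.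
Qed.

(* The two mixed points below differ by u (x - y); [le_of_mul01] lets u tend to 1. *)
Lemma min_towards_sqr_l1_le G1 G2 x y : 0 < lam ->
  (forall i, 0 < x i) -> (forall i, 0 < y i) -> \sum_i x i = 1 -> \sum_i y i = 1 ->
  min_towards G1 x y -> min_towards G2 y x ->
  lam * (\sum_i `|x i - y i|) ^+ 2 <= \sum_i (G1 i - G2 i) * (y i - x i).
Proof.
move=> lam0 x0 y0 x1 y1 hx hy; apply: le_of_mul01 => u /andP[u0 u1].
pose t := (1 - u) / 2.
have t0 : 0 < t by rewrite /t; lra.
have t1 : t < 1 by rewrite /t; lra.
have ht : 0 < t <= 1 by rewrite t0 ltW.
have t01 : 0 < t < 1 by rewrite t0 t1.
set x' := mix t x y; set y' := mix t y x.
have x'0 := mix_gt0 t01 x0 y0; have y'0 := mix_gt0 t01 y0 x0.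
have vx := min_towards_variational (ltW lam0) (fun i => ltW (x0 i)) t0 x'0 (hx t ht).
have vy := min_towards_variational (ltW lam0) (fun i => ltW (y0 i)) t0 y'0 (hy t ht).
have dx'y' i : x' i - y' i = u * (x i - y i) by rewrite /x' /y' /mix /t; field.
have := sqr_l1_le_jeffreys x'0 y'0 (_ : \sum_i x' i = 1) (_ : \sum_i y' i = 1).
rewrite /x' /y' !sum_mix x1 y1 !mulr1 subrK => /(_ erefl erefl).
rewrite -/x' -/y'.
under eq_bigr do rewrite dx'y' normrM (gtr0_norm u0).
under [X in _ <= X]eq_bigr do rewrite dx'y' mulrCA.
rewrite -!mulr_sumr exprMn.
set D := \sum_i `|x i - y i|; set J := \sum_i (ln (x' i) - ln (y' i)) * (x i - y i).
set E := \sum_i (G1 i - G2 i) * (y i - x i) => hJ.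
have lamJ : lam * J <= E.
  rewrite -subr_ge0 (_ : E - lam * J = \sum_i (G1 i + lam * ln (x' i)) * (y i - x i)
                          + \sum_i (G2 i + lam * ln (y' i)) * (x i - y i)).
    exact: addr_ge0 vx vy.
  by rewrite /J mulr_sumr -sumrB -big_split; apply: eq_bigr => i _ /=; ring.
rewrite -(ler_pM2l u0); apply: le_trans (_ : u * (lam * J) <= _); last by rewrite ler_pM2l.
have := ler_wpM2l (ltW lam0) hJ; lra.
Qed.

End entropic_objective.

Section norm1.
Variables (R : realType) (n m : nat).
Implicit Types A B C : 'M[R]_(n, m).

Lemma norm1E A : norm1 A = \sum_(ij : 'I_n * 'I_m) `|A ij.1 ij.2|.
Proof. by rewrite /norm1 pair_bigA. Qed.

Lemma norm10 : norm1 (0 : 'M[R]_(n, m)) = 0.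
Proof. by rewrite norm1E big1 // => ij _; rewrite mxE normr0. Qed.

Lemma norm1_ge0 A : 0 <= norm1 A.
Proof. by rewrite norm1E sumr_ge0. Qed.

Lemma norm1_entry A i j : `|A i j| <= norm1 A.
Proof. by rewrite norm1E (bigD1 (i, j)) //= lerDl sumr_ge0. Qed.

Lemma norm1_eq0 A : norm1 A = 0 -> A = 0.
Proof.
move=> A0; apply/matrixP => i j; apply/eqP.
by rewrite mxE -normr_eq0 eq_le normr_ge0 andbT -A0 norm1_entry.
Qed.

Lemma norm1D A B : norm1 (A + B) <= norm1 A + norm1 B.
Proof.
by rewrite !norm1E -big_split; apply: ler_sum => ij _; rewrite mxE ler_normD.
Qed.

Lemma norm1_distC A B : norm1 (A - B) = norm1 (B - A).
Proof. by rewrite !norm1E; apply: eq_bigr => ij _; rewrite !mxE distrC. Qed.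

Lemma norm1_dist_triangle A B C : norm1 (A - C) <= norm1 (A - B) + norm1 (B - C).
Proof. by rewrite -[A - C](subrKA B) norm1D. Qed.

End norm1.

Definition norm1_lipschitz (R : realType) (n m : nat) (q : R)
    (f : 'M[R]_(n, m) -> 'M[R]_(n, m)) :=
  forall A B, norm1 (f A - f B) <= q * norm1 (A - B).

Section norm1_contraction.
Variables (R : realType) (n m : nat) (f : 'M[R]_(n, m) -> 'M[R]_(n, m)) (q : R).
Hypotheses (q_ge0 : 0 <= q) (q_lt1 : q < 1) (f_lip : norm1_lipschitz q f).

Lemma iter_dist_succ_le x k :
  norm1 (iter k.+1 f x - iter k f x) <= q ^+ k * norm1 (f x - x).
Proof.
elim: k => [|k IH]; first by rewrite expr0 mul1r.
by apply: le_trans (f_lip _ _) _; rewrite exprS -mulrA ler_wpM2l.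
Qed.

Lemma iter_dist_le x k l : (k <= l)%N ->
  norm1 (iter l f x - iter k f x) <= q ^+ k / (1 - q) * norm1 (f x - x).
Proof.
have q1 : 0 < 1 - q by rewrite subr_gt0.
move=> /subnKC <-; set d := norm1 (f x - x).
suff geom i :
    norm1 (iter (k + i) f x - iter k f x) <= q ^+ k * (1 - q ^+ i) / (1 - q) * d.
  apply: le_trans (geom _) _; rewrite ler_wpM2r ?norm1_ge0 // ler_pM2r ?invr_gt0 //.
  by rewrite ler_piMr ?exprn_ge0 // lerBlDr lerDl exprn_ge0.
elim: i => [|i IH].
  by rewrite addn0 subrr norm10 expr0 subrr mulr0 !mul0r.
rewrite addnS; apply: le_trans (norm1_dist_triangle _ (iter (k + i) f x) _) _.
have -> : q ^+ k * (1 - q ^+ i.+1) / (1 - q) * d =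
    q ^+ (k + i) * d + q ^+ k * (1 - q ^+ i) / (1 - q) * d.
  by rewrite exprD exprS; field; rewrite gt_eqF.
exact: lerD (iter_dist_succ_le _ _) IH.
Qed.

Lemma contraction_fixed_unique A B : f A = A -> f B = B -> A = B.
Proof.
move=> fA fB; apply/eqP; rewrite -subr_eq0; apply/eqP/norm1_eq0.
have := f_lip A B; rewrite fA fB => h.
have : (1 - q) * norm1 (A - B) <= 0 by lra.
by rewrite pmulr_rle0 ?subr_gt0 // => h0; apply/eqP; rewrite eq_le h0 norm1_ge0.
Qed.

Lemma contraction_apriori A x k : f A = A ->
  norm1 (iter k f x - A) <= q ^+ k / (1 - q) * norm1 (f x - x).
Proof.
move=> fA; have q1 : 0 < 1 - q by rewrite subr_gt0.
have h1 := norm1_dist_triangle (iter k f x) (iter k.+1 f x) A.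
rewrite (norm1_distC (iter k f x) (iter k.+1 f x)) in h1.
have h2 : norm1 (iter k.+1 f x - A) <= q * norm1 (iter k f x - A).
  by rewrite -{1}fA; exact: f_lip.
have := iter_dist_succ_le x k.
rewrite mulrAC ler_pdivlMr // mulrBr mulr1 [_ * q]mulrC; lra.
Qed.

Lemma contraction_fixed_exists : exists A, f A = A.
Proof.
have q1 : 0 < 1 - q by rewrite subr_gt0.
pose x k := iter k f 0; pose d := norm1 (f 0 - 0); pose e k := q ^+ k / (1 - q) * d.
pose L := \matrix_(i, j) sup (range (fun k => x k i j - e k)).
pose N : R := (n * m)%:R.
have xL k : norm1 (x k - L) <= N * e k.
  rewrite norm1_distC norm1E (_ : N * e k = \sum_(ij : 'I_n * 'I_m) e k); last first.
    by rewrite sumr_const card_prod !card_ord mulr_natl.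
  apply: ler_sum => -[i j] _; rewrite !mxE; apply: sup_dist_le => {}k l kl.
  by have := le_trans (norm1_entry _ i j) (iter_dist_le 0 kl); rewrite !mxE.
exists L; apply/eqP; rewrite -subr_eq0; apply/eqP/norm1_eq0/eqP.
rewrite eq_le norm1_ge0 andbT.
apply: (@le0_geometric _ _ (2 * q * N * d / (1 - q)) q); first by rewrite q_ge0.
move=> k; apply: le_trans (norm1_dist_triangle _ (x k.+1) _) _.
have fLx : norm1 (f L - x k.+1) <= q * (N * e k).
  by rewrite norm1_distC; apply: le_trans (f_lip _ _) _; rewrite ler_wpM2l.
have -> : 2 * q * N * d / (1 - q) * q ^+ k = q * (N * e k) + N * e k.+1.
  by rewrite /e exprS; field; rewrite gt_eqF.
exact: lerD fLx (xL k.+1).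
Qed.

End norm1_contraction.

Section matrix_entries.
Variables (R : realType) (n m : nat).
Implicit Types A B : 'M[R]_(n, m).

Definition entries A (ij : 'I_n * 'I_m) := A ij.1 ij.2.

Lemma entries_mix t A B : entries ((1 - t) *: A + t *: B) = mix t (entries A) (entries B).
Proof. by apply/funext => ij; rewrite /entries /mix !mxE. Qed.

Lemma norm1_entries A B : norm1 (A - B) = \sum_ij `|entries A ij - entries B ij|.
Proof. by rewrite norm1E; apply: eq_bigr => ij _; rewrite !mxE. Qed.

Lemma frob_entries A B : frob A B = \sum_ij entries A ij * entries B ij.
Proof.
rewrite /frob /mxtrace -(pair_bigA _ (fun i j => A i j * B i j)) exchange_big /=.
by apply: eq_bigr => j _; rewrite mxE; apply: eq_bigr => i _; rewrite mxE.
Qed.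

Lemma norminf_ge0 A : 0 <= norminf A.
Proof.
have max_ge0 (x y : R) : 0 <= x -> 0 <= y -> 0 <= Num.max x y by rewrite le_max => ->.
by rewrite /norminf; elim/big_ind: _ => // i _; elim/big_ind: _.
Qed.

Lemma norminf_entry A i j : `|A i j| <= norminf A.
Proof. by rewrite /norminf (bigD1 i) //= le_max (bigD1 j) //= le_max lexx. Qed.

End matrix_entries.

Lemma mulmx_entry_le (R : realType) (p n m : nat) (H : 'M[R]_(p, n)) (X : 'M[R]_(n, m)) i j :
  `|(H *m X) i j| <= norminf H * norm1 X.
Proof.
rewrite mxE (le_trans (ler_norm_sum _ _ _)) // /norm1 mulr_sumr; apply: ler_sum => k _.
rewrite normrM; apply: le_trans (ler_wpM2r (normr_ge0 _) (norminf_entry H i k)) _.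
by rewrite ler_wpM2l ?norminf_ge0 // (bigD1 j) //= lerDl sumr_ge0.
Qed.

Section entropic_transport.
Variables (R : realType) (n m : nat) (a : 'cV[R]_n) (b : 'cV[R]_m).
Hypotheses (a_simplex : simplex_pos a) (b_simplex : simplex_pos b).
Implicit Types (A B P Q : 'M[R]_(n, m)).

Lemma couplings_mix t P Q : 0 <= t <= 1 -> couplings a b P -> couplings a b Q ->
  couplings a b ((1 - t) *: P + t *: Q).
Proof.
move=> /andP[t0 t1] [P0 [Pa Pb]] [Q0 [Qa Qb]]; split; [|split].
- by move=> i j; rewrite !mxE addr_ge0 ?mulr_ge0 ?subr_ge0.
- by rewrite mulmxDl -!scalemxAl Pa Qa -scalerDl subrK scale1r.
- by rewrite linearD !linearZ /= mulmxDl -!scalemxAl Pb Qb -scalerDl subrK scale1r.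
Qed.

Lemma couplings_outer : couplings_pos a b (a *m b^T).
Proof.
have [a0 a1] := a_simplex; have [b0 b1] := b_simplex.
have abE i j : (a *m b^T) i j = a i 0 * b j 0 by rewrite mxE big_ord1 mxE.
split; last by move=> i j; rewrite abE mulr_gt0.
split; first by move=> i j; rewrite abE ltW ?mulr_gt0.
split; apply/matrixP => i k; rewrite (ord1 k) !mxE.
  by under eq_bigr do rewrite abE mxE mulr1; rewrite -mulr_sumr b1 mulr1.
by under eq_bigr do rewrite mxE abE mxE mulr1; rewrite -mulr_suml a1 mul1r.
Qed.

Lemma sum_entries_coupling P : couplings a b P -> \sum_ij entries P ij = 1.
Proof.
move=> [_ [Pa _]]; rewrite -pair_bigA -a_simplex.2; apply: eq_bigr => i _.
by rewrite -Pa mxE; apply: eq_bigr => j _; rewrite mxE mulr1.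
Qed.

Lemma T_obj_entries (H : 'M[R]_n) (C : 'M[R]_(n, m)) lam A P :
  T_obj H C lam A P = entobj lam (entries (grad_g H C A)) (entries P).
Proof.
by rewrite /T_obj /entobj big_split /= -mulr_sumr frob_entries /entropy_h pair_bigA.
Qed.

Lemma grad_g_sym (H : 'M[R]_n) (C : 'M[R]_(n, m)) A : H^T = H -> grad_g H C A = H *m A + C.
Proof.
move=> HT; rewrite /grad_g HT; congr (_ *m _ + _).
by apply/matrixP => i j; rewrite !mxE; field.
Qed.

Variables (H : 'M[R]_n) (C : 'M[R]_(n, m)) (lam : R) (T : 'M[R]_(n, m) -> 'M[R]_(n, m)).
Hypothesis T_argmin : is_T_lambda a b H C lam T.

Lemma T_lambda_min_towards A P : couplings a b P ->
  min_towards lam (entries (grad_g H C A)) (entries (T A)) (entries P).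
Proof.
move=> cP t /andP[t0 t1]; rewrite -entries_mix -!T_obj_entries.
by apply: (T_argmin A).2; apply: couplings_mix (T_argmin A).1 cP; rewrite ltW.
Qed.

Lemma T_lambda_pos A : 0 < lam -> couplings_pos a b (T A).
Proof.
move=> lam0; have [cT _] := T_argmin A; split=> // i j.
have [cP Ppos] := couplings_outer.
have := min_towards_gt0 lam0 (fun ij => cT.1 ij.1 ij.2) (fun ij => Ppos ij.1 ij.2).
by move=> /(_ _ (T_lambda_min_towards A cP) (i, j)).
Qed.

Lemma T_lambda_lipschitz : H^T = H -> 0 < lam -> norm1_lipschitz (norminf H / lam) T.
Proof.
move=> HT lam0 A B; set D := norm1 (T A - T B).
have [cA posA] := T_lambda_pos A lam0; have [cB posB] := T_lambda_pos B lam0.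
have key : lam * D ^+ 2 <= norminf H * norm1 (A - B) * D.
  rewrite {1}/D norm1_entries.
  apply: le_trans (min_towards_sqr_l1_le lam0
    (fun ij => posA ij.1 ij.2) (fun ij => posB ij.1 ij.2)
    (sum_entries_coupling cA) (sum_entries_coupling cB)
    (T_lambda_min_towards A cB) (T_lambda_min_towards B cA)) _.
  rewrite /D (norm1_distC (T A)) (norm1E (T B - T A)) mulr_sumr.
  apply: ler_sum => -[i j] _; rewrite /entries /=.
  have -> : grad_g H C A i j - grad_g H C B i j = (H *m (A - B)) i j.
    by rewrite !grad_g_sym // mulmxBr !mxE opprD addrACA subrr addr0.
  have -> : (T B - T A) i j = T B i j - T A i j by rewrite !mxE.
  by rewrite (le_trans (ler_norm _)) // normrM ler_wpM2r ?mulmx_entry_le.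
rewrite mulrAC ler_pdivlMr //.
have [D0|Dn0] := eqVneq D 0; first by rewrite D0 mul0r mulr_ge0 ?norminf_ge0 ?norm1_ge0.
rewrite -(ler_pM2r (_ : 0 < D)) ?lt_def ?Dn0 ?norm1_ge0 //.
by rewrite mulrAC -expr2 mulrC.
Qed.

End entropic_transport.

Theorem theorem1 (R : realType) (n m : nat) (a : 'cV[R]_n) (b : 'cV[R]_m)
    (H : 'M[R]_n) (C : 'M[R]_(n, m)) (lam : R)
    (T : 'M[R]_(n, m) -> 'M[R]_(n, m)) :
  simplex_pos a -> simplex_pos b ->
  H^T = H ->
  norminf H < lam ->
  is_T_lambda a b H C lam T ->
  (exists q : R, 0 <= q < 1 /\
     forall A B : 'M[R]_(n, m), norm1 (T A - T B) <= q * norm1 (A - B)) /\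
  (exists pistar : 'M[R]_(n, m),
     couplings_pos a b pistar /\ T pistar = pistar /\
     (forall pi, T pi = pi -> pi = pistar) /\
     forall pi0 : 'M[R]_(n, m), couplings a b pi0 ->
       forall K : nat,
         norm1 (iter K T pi0 - pistar) <=
           (norminf H / lam) ^+ K / (1 - norminf H / lam)
           * norm1 (T pi0 - pi0)).
Proof.
move=> a_simplex b_simplex HT H_lt_lam T_argmin.
have lam0 : 0 < lam := le_lt_trans (norminf_ge0 H) H_lt_lam.
have q0 : 0 <= norminf H / lam by rewrite divr_ge0 ?norminf_ge0 ?ltW.
have q1 : norminf H / lam < 1 by rewrite ltr_pdivrMr // mul1r.
have lip := T_lambda_lipschitz a_simplex b_simplex T_argmin HT lam0.
have [pistar fixed] := contraction_fixed_exists q0 q1 lip.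
split; first by exists (norminf H / lam); rewrite q0 q1.
exists pistar; split; first by rewrite -fixed; exact: T_lambda_pos.
split=> //; split=> [pi fixed_pi|pi0 _ K].
  exact: (contraction_fixed_unique q1 lip fixed_pi fixed).
exact: (contraction_apriori q0 q1 lip pi0 K fixed).
Qed.
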